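(* Let $T\in\mathbb{P}(Sym^d(\mathbb{C}^{n+1}))$ and let $A\subset\mathbb{P}^n$ be a minimal decomposition of $T$. Assume that $\ell(A)\le d$ and that $A$ does not contain an aligned (i.e. collinear) subset of cardinality $d/2$. Then $T$ has rank $\ell(A)$ and $T$ is identifiable.
   Context: All spaces are complex projective; $\ell(A)$ is the cardinality of $A$. The Veronese map $\nu_d:\mathbb{P}^n\to\mathbb{P}(Sym^d(\mathbb{C}^{n+1}))$ sends $[L]$ ($L$ a linear form) to $[L^d]$. A finite set $A$ is a decomposition of $T$ if $T\in\langle\nu_d(A)\rangle$; it is minimal if no proper subset of $A$ is a decomposition of $T$. The rank of $T$ is the minimal cardinality of a decomposition. $T$ of rank $r$ is identifiable if it has only one decomposition of cardinality $r$, up to scaling and permutation of summands. *)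

From HB Require Import structures.
From mathcomp Require Import all_boot all_order all_algebra all_fingroup.
From mathcomp Require Import reals complex finmap.
Set Implicit Arguments. Unset Strict Implicit. Unset Printing Implicit Defensive.
Import Order.TTheory GRing.Theory Num.Theory.
Local Open Scope ring_scope.
Local Open Scope fset_scope.

Section Defs.
Variable R : realType.
Local Notation C := (R[i]).
Variables n d : nat.

(* vectors of C^{n+1}; a point of P^n is represented by a nonzero vector,
   i.e. (the coefficients of) a nonzero linear form L *)
Definition vec := 'rV[C]_(n.+1).

(* Sym^d(C^{n+1}) realised inside the tensor power (C^{n+1})^{(x)d}:
   tensors are functions of d-tuples of indices *)
Definition tensor := {ffun d.-tuple 'I_(n.+1) -> C}.

Definition is_symmetric (T : tensor) : Prop :=
  forall (t : d.-tuple 'I_(n.+1)) (s : 'S_d),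
    T [tuple tnth t (s i) | i < d] = T t.

Definition veronese (v : vec) : tensor :=
  [ffun t : d.-tuple 'I_(n.+1) => \prod_(i <- t) v ord0 i].

Definition point_set (A : {fset vec}) : Prop :=
  (forall v, v \in A -> v != 0) /\
  (forall v w, v \in A -> w \in A -> v != w -> forall c : C, v != c *: w).

Definition decomposition (T : tensor) (A : {fset vec}) : Prop :=
  point_set A /\
  exists c : vec -> C, T = \sum_(v <- A) c v *: veronese v.

Definition minimal_decomposition (T : tensor) (A : {fset vec}) : Prop :=
  decomposition T A /\ forall B, B `<` A -> ~ decomposition T B.

Definition has_rank (T : tensor) (r : nat) : Prop :=
  (exists A, decomposition T A /\ #|` A| = r) /\
  (forall B, decomposition T B -> (r <= #|` B|)%N).

Definition same_points (A B : {fset vec}) : Prop :=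
  (forall v, v \in A -> exists2 w, w \in B & exists c : C, v = c *: w) /\
  (forall w, w \in B -> exists2 v, v \in A & exists c : C, w = c *: v).

Definition identifiable (T : tensor) (r : nat) : Prop :=
  has_rank T r /\
  forall A B, decomposition T A -> #|` A| = r ->
              decomposition T B -> #|` B| = r -> same_points A B.

Definition aligned (S : {fset vec}) : Prop :=
  exists u w : vec, forall v, v \in S -> exists a b : C, v = (a *: u + b *: w)%R.

End Defs.

(* Products of d linear forms span the dual of Sym^d, so a relation among the
   p^d can be tested on them. If such a relation with no zero coefficient holds
   on a set S of at most 2d+1 points, then S has at least d+2 points (otherwise
   some product of d forms vanishes on all points of S but one), and S is
   collinear: else choose z, q in S and r off the line zq, and a linear form h
   vanishing at z and q but not at r; testing only against products containing h
   gives a relation of degree d-1 on the points S1 of S off h = 0 (each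
   coefficient multiplied by h(p)), so by induction S1 lies on a line L and has
   at least d+1 points, and a form vanishing on L but not at some point x of S
   gives a degree d-1 relation on at most |S| - |S1| <= d points, too few.
   Now let B be a decomposition with |B| <= |A| and suppose some point of A is
   proportional to no point of B. Subtracting the two decompositions gives a
   nontrivial relation on at most 2d points; its support S is collinear, has at
   least d+2 points and contains the unmatched points of A, which forces
   |S| <= 2 |A ∩ S| < d. So every point of A appears in B: this gives
   |B| >= |A|, and B = A as sets of points of P^n when |B| = |A|. *)

From HB Require Import structures.
From mathcomp Require Import all_boot all_order all_algebra all_fingroup.
From mathcomp Require Import reals complex finmap zify.
From Stdlib Require Import Classical.
Import Order.TTheory GRing.Theory Num.Theory.
Local Open Scope ring_scope.
Local Open Scope fset_scope.

Lemma card_le_double_meet {K : choiceType} {A B MA MB S : {fset K}} :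
  MA `<=` A -> MB `<=` B -> S `<=` A `|` (B `\` MB) -> A `\` MA `<=` S ->
  (#|` B| <= #|` A|)%N -> (#|` MA| <= #|` MB|)%N -> (#|` S| <= 2 * #|` A `&` S|)%N.
Proof.
move=> MAA MBB /fsubsetP SAB /fsubsetP AS BA MAB.
have /fsubset_leq_card S_le : S `<=` (A `&` S) `|` (B `\` MB).
  by apply/fsubsetP => x xS; have := SAB x xS; rewrite !inE xS; case: (x \in A).
have /fsubset_leq_card AMA_le : A `\` MA `<=` A `&` S.
  by apply/fsubsetP => x xAMA; rewrite inE AS // andbT; move: xAMA; rewrite inE => /andP [].
move: S_le AMA_le (cardfsUI (A `&` S) (B `\` MB)).
rewrite !cardfsDS //; have := fsubset_leq_card MAA; have := fsubset_leq_card MBB.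
lia.
Qed.

Section LinearForms.
Context {F : fieldType} {m : nat}.
Local Notation point := 'rV[F]_m.
Local Notation form := 'cV[F]_m.

Definition eval_form (h : form) (v : point) : F := (v *m h) 0 0.

Definition eval_forms (f : seq form) (v : point) : F :=
  \prod_(h <- f) eval_form h v.

Lemma eval_formsZ (f : seq form) (k : F) (v : point) :
  eval_forms f (k *: v) = k ^+ size f * eval_forms f v.
Proof.
elim: f => [|h f IH]; first by rewrite /eval_forms !big_nil mulr1.
rewrite /eval_forms !big_cons -!/(eval_forms f _) IH /eval_form -scalemxAl mxE.
by rewrite exprS mulrACA.
Qed.

Lemma eval_form_eq0 {n} {M : 'M[F]_(n, m)} {h : form} {v : point} :
  M *m h = 0 -> (v <= M)%MS -> eval_form h v = 0.
Proof. by move=> Mh /submxP [D ->]; rewrite /eval_form -mulmxA Mh mulmx0 mxE. Qed.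

Lemma separating_form {n} {M : 'M[F]_(n, m)} {x : point} :
  ~~ (x <= M)%MS -> exists2 h : form, M *m h = 0 & eval_form h x != 0.
Proof.
rewrite submxE => /matrix0Pn [i [j xKj]].
exists (col j (cokermx M)); first by rewrite colE mulmxA mulmx_coker mul0mx.
by rewrite /eval_form colE mulmxA -colE mxE -(ord1 i).
Qed.

Lemma separating_forms d (z : point) (s : seq point) :
  z != 0 -> (size s <= d)%N -> {in s, forall p, ~~ (z <= p)%MS} ->
  exists f : d.-tuple form, eval_forms f z != 0 /\ {in s, forall p, eval_forms f p = 0}.
Proof.
move=> z0 sd zs.
have /fin_all_exists2 [h hs hz] :
    forall i : 'I_d, exists2 h : form, nth 0 s i *m h = 0 & eval_form h z != 0.
  move=> i; apply: separating_form.
  have [ltis|leis] := ltnP i (size s); first exact/zs/mem_nth.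
  by rewrite nth_default //; apply: contra z0 => /submx0null ->.
exists [tuple h i | i < d].
have eval_h v : eval_forms [tuple h i | i < d] v = \prod_(i < d) eval_form (h i) v.
  by rewrite /eval_forms big_tuple; apply: eq_bigr => i _; rewrite tnth_mktuple.
split=> [|p ps]; rewrite eval_h; first exact/prodf_neq0.
apply/eqP/prodf_eq0; exists (Ordinal (leq_trans (etrans (index_mem p s) ps) sd)) => //.
by rewrite (eval_form_eq0 (hs _)) //= nth_index.
Qed.

Definition distinct_points (S : {fset point}) : Prop :=
  {in S, forall p, p != 0} /\ {in S &, forall p q, (p == q)%MS -> p = q}.

Lemma distinct_pointsS {S S' : {fset point}} :
  S' `<=` S -> distinct_points S -> distinct_points S'.
Proof. by move=> /fsubsetP sub [S0 Seq]; split=> [p /sub|p q /sub pS /sub]; auto. Qed.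

Lemma rV_sub_eqmx (u v : point) : u != 0 -> (u <= v)%MS -> (u == v)%MS.
Proof.
move=> u0 uv; have v0 : v != 0.
  by apply: contraNneq u0 => v0; move: uv; rewrite v0 => /submx0null ->.
by rewrite -(mxrank_leqif_sup uv).2 !rank_rV u0 v0 uv.
Qed.

Lemma eqmxb_sym (u v : point) : (u == v)%MS = (v == u)%MS.
Proof. exact: andbC. Qed.

Lemma eqmxb_trans {u v w : point} : (u == v)%MS -> (v == w)%MS -> (u == w)%MS.
Proof. by move=> /eqmxP uv /eqmxP vw; apply/eqmxP/(eqmx_trans uv vw). Qed.

Definition collinear (S : {fset point}) : Prop :=
  exists u w : point, {in S, forall p, (p <= u + w)%MS}.

Lemma not_collinearP {S : {fset point}} : ~ collinear S ->
  forall u w : point, exists2 p, p \in S & ~~ (p <= u + w)%MS.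
Proof.
move=> ncol u w; apply: NNPP => on_line; apply: ncol; exists u, w => p pS.
by apply: contraT => pL; case: on_line; exists p.
Qed.

Lemma not_collinear_triple {S : {fset point}} : ~ collinear S ->
  exists z q r, [/\ z \in S, q \in S, r \in S, z != q & ~~ (r <= z + q)%MS].
Proof.
move=> /not_collinearP off_line; have [z zS _] := off_line 0 0.
have [q qS qL] := off_line z 0; have [r rS rL] := off_line z q.
by exists z, q, r; split=> //; apply: contraNneq qL => <-; rewrite addsmxSl.
Qed.

Definition off_hyperplane (h : form) (S : {fset point}) : {fset point} :=
  [fset p in S | eval_form h p != 0].

Lemma off_hyperplaneS h S : off_hyperplane h S `<=` S.
Proof. by apply/fsubsetP => p; rewrite !inE => /andP []. Qed.

(* A linear relation with no zero coefficient among the [p^d], p in S; it is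
   tested against products of d linear forms, which span the dual of Sym^d. *)
Definition veronese_relation d (S : {fset point}) (c : point -> F) : Prop :=
  {in S, forall p, c p != 0} /\
  forall f : d.-tuple form, \sum_(p <- S) c p * eval_forms f p = 0.

Lemma veronese_relation_card {d S c z} : distinct_points S -> z \in S ->
  veronese_relation d S c -> (d.+1 < #|` S|)%N.
Proof.
move=> [S0 Seq] zS [c0 rel]; rewrite ltnNge; apply/negP => Sd.
have [|||f [fz fS]] := @separating_forms d z (enum_fset (S `\ z)).
- exact: S0.
- by move: Sd; rewrite (cardfsD1 z) zS.
- move=> p; rewrite in_fsetD1 => /andP [pz pS]; apply: contra pz => zp.
  by rewrite (Seq z p) // rV_sub_eqmx ?S0.
move: (rel f); rewrite (big_fsetD1 _ zS) /= big1_fset => [|p pSz _].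
  by rewrite addr0 => /eqP; apply/negP; rewrite mulf_neq0 ?c0.
by rewrite fS ?mulr0.
Qed.

Lemma veronese_relation_off {d S c} h : veronese_relation d.+1 S c ->
  veronese_relation d (off_hyperplane h S) (fun p => c p * eval_form h p).
Proof.
move=> [c0 rel]; split=> [p|f].
  by rewrite !inE => /andP [pS hp]; rewrite mulf_neq0 ?c0.
have := rel [tuple of h :: f]; rewrite -(big_fset_incl _ (off_hyperplaneS h S)).
  by apply: etrans; apply: eq_bigr => p _; rewrite /eval_forms big_cons mulrA.
move=> p pS; rewrite !inE pS /= negbK => /eqP hp.
by rewrite /eval_forms big_cons -/(eval_forms f p) hp mul0r mulr0.
Qed.

Lemma veronese_relation_collinear d S c : distinct_points S ->
  (#|` S| <= d.*2.+1)%N -> veronese_relation d S c -> collinear S.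
Proof.
elim: d S c => [|d IH] S c PS Sd rel; apply: NNPP => ncol;
  have [z [q [r [zS qS rS zq rzq]]]] := not_collinear_triple ncol.
  by have := veronese_relation_card PS zS rel; lia.
have [h hzq hr] := separating_form rzq.
have [hz hq] : eval_form h z = 0 /\ eval_form h q = 0.
  by split; apply: (eval_form_eq0 hzq); rewrite ?addsmxSl ?addsmxSr.
set S1 := off_hyperplane h S; have S1S : S1 `<=` S := off_hyperplaneS h S.
have rel1 := veronese_relation_off h rel.
have rS1 : r \in S1 by rewrite !inE rS hr.
have S1_small : (#|` S1| <= d.*2.+1)%N.
  have /fsubset_leq_card : S1 `<=` S `\ z `\ q.
    apply/fsubsetP => p; rewrite !inE => /andP [pS hp]; rewrite pS !andbT.
    by apply/andP; split; apply: contraNneq hp => ->; rewrite ?hz ?hq.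
  have := cardfsD1 z S; have := cardfsD1 q (S `\ z); rewrite zS !inE eq_sym zq qS.
  lia.
have [u [w S1uw]] := IH _ _ (distinct_pointsS S1S PS) S1_small rel1.
have S1_big := veronese_relation_card (distinct_pointsS S1S PS) rS1 rel1.
have [x xS xuw] := not_collinearP ncol u w.
have [h' huw hx] := separating_form xuw.
set S2 := off_hyperplane h' S; have S2S : S2 `<=` S := off_hyperplaneS h' S.
have S2_small : (#|` S2| <= #|` S| - #|` S1|)%N.
  rewrite -cardfsDS //; apply/fsubset_leq_card/fsubsetP => p.
  rewrite !inE => /andP [pS hp]; rewrite pS andbT; apply: contra hp => hp.
  by rewrite (eval_form_eq0 huw) // S1uw // !inE pS.
have xS2 : x \in S2 by rewrite !inE xS hx.
have := veronese_relation_card (distinct_pointsS S2S PS) xS2 (veronese_relation_off h' rel).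
by rewrite ltnNge (leq_trans S2_small) // leq_subLR (leq_trans Sd) // -addnn -addSn leq_add2r.
Qed.

Definition matched (A B : {fset point}) : {fset point} :=
  [fset v in A | has (fun w => (v == w)%MS) B].

Lemma matchedS A B : matched A B `<=` A.
Proof. by apply/fsubsetP => v; rewrite !inE => /andP []. Qed.

Lemma card_matched A B : distinct_points A ->
  (#|` matched A B| <= #|` matched B A|)%N.
Proof.
move=> [_ Aeq]; pose partner v := nth v [seq w <- B | (v == w)%MS] 0.
have partnerP v : v \in matched A B -> v \in A /\ partner v \in [seq w <- B | (v == w)%MS].
  by rewrite !inE => /andP [vA /hasP [w wB vw]]; split; rewrite // mem_nth // size_filter
    -has_count; apply/hasP; exists w.
have /card_in_imfsetP/eqP <- : {in matched A B &, injective partner}.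
  move=> v1 v2 /partnerP [v1A]; rewrite mem_filter => /andP [v1w _].
  move=> /partnerP [v2A]; rewrite mem_filter => /andP [v2w _] e.
  by apply: Aeq => //; apply: (eqmxb_trans v1w); rewrite e eqmxb_sym.
apply/fsubset_leq_card/fsubsetP => _ /imfsetP [v /partnerP [vA]] /= + ->.
by rewrite mem_filter !inE => /andP [vw ->]; apply/hasP; exists v; rewrite // eqmxb_sym.
Qed.

Definition scale_factor (p w : point) : F := (w *m pinvmx p) 0 0.

Lemma scale_factorP {p w : point} : (w <= p)%MS -> w = scale_factor p w *: p.
Proof. by move=> wp; rewrite -{1}(mulmxKpV wp) [_ *m pinvmx p]mx11_scalar mul_scalar_mx. Qed.

Lemma big_eqmx_point {G : {fset point}} {w p0 : point} (g : point -> F) :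
  distinct_points G -> p0 \in G -> (w == p0)%MS ->
  \sum_(p <- G | (w == p)%MS) g p = g p0.
Proof.
move=> [_ Geq] p0G wp0; rewrite big_mkcond (big_fsetD1 _ p0G) /= wp0 big1_fset ?addr0 //.
move=> p; rewrite in_fsetD1 => /andP [pp0 pG] _; case: ifP => // wp.
by rewrite (Geq p p0) ?eqxx // in pp0; apply: eqmxb_trans wp0; rewrite eqmxb_sym.
Qed.

(* The relation [a] on A minus [b] on B, rewritten on pairwise non-proportional
   points: a point w of B proportional to p in A is replaced by p, which
   multiplies its coefficient by the d-th power of the ratio. *)
Definition merged (A B : {fset point}) : {fset point} := A `|` (B `\` matched B A).

Definition merged_coef d (A B : {fset point}) (a b : point -> F) (p : point) : F :=
  (if p \in A then a p else 0) - \sum_(w <- B | (w == p)%MS) b w * scale_factor p w ^+ d.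

Lemma card_merged A B : (#|` merged A B| <= #|` A| + #|` B|)%N.
Proof.
have := cardfsUI A (B `\` matched B A); have := fsubset_leq_card (fsubsetDl B (matched B A)).
rewrite /merged; lia.
Qed.

Lemma distinct_points_merged {A B} : distinct_points A -> distinct_points B ->
  distinct_points (merged A B).
Proof.
move=> [A0 Aeq] [B0 Beq].
have unmatched w v : w \in B `\` matched B A -> v \in A -> ~~ (w == v)%MS.
  rewrite in_fsetD => /andP [wnm wB] vA; apply: contra wnm => wv.
  by rewrite !inE wB; apply/hasP; exists v.
split=> [p|p q]; rewrite !in_fsetU.
  by case/orP=> [/A0|]; rewrite // in_fsetD => /andP [_ /B0].
case/orP=> [pA|pB] /orP [qA|qB] pq; first exact: Aeq.
- by move: (unmatched q p qB pA); rewrite eqmxb_sym pq.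
- by move: (unmatched p q pB qA); rewrite pq.
by move: pB qB; rewrite !in_fsetD => /andP [_ pB] /andP [_ qB]; apply: Beq.
Qed.

Lemma merged_relation d A B a b : distinct_points A -> distinct_points B ->
  (forall f : d.-tuple form,
     \sum_(v <- A) a v * eval_forms f v = \sum_(w <- B) b w * eval_forms f w) ->
  forall f : d.-tuple form,
    \sum_(p <- merged A B) merged_coef d A B a b p * eval_forms f p = 0.
Proof.
move=> PA PB eqAB f; have PG := distinct_points_merged PA PB.
have AG : A `<=` merged A B := fsubsetUl _ _.
have partner w : w \in B -> exists2 p, p \in merged A B & (w == p)%MS.
  move=> wB; have [/hasP [v vA wv]|nm] := boolP (has (fun v => (w == v)%MS) A).
    by exists v; rewrite // (fsubsetP AG).
  by exists w; rewrite ?andbb // /merged !inE wB /= nm orbT.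
under eq_bigr do rewrite mulrBl; apply/eqP; rewrite sumrB subr_eq0; apply/eqP.
transitivity (\sum_(v <- A) a v * eval_forms f v).
  rewrite -(big_fset_incl _ AG) => [|p _ /negbTE ->]; last by rewrite mul0r.
  by apply: eq_fbigr => v vA _; rewrite vA.
rewrite eqAB; symmetry.
transitivity (\sum_(p <- merged A B) \sum_(w <- B)
                if (w == p)%MS then b w * eval_forms f w else 0).
  apply: eq_fbigr => p pG _; rewrite big_distrl big_mkcond /=; apply: eq_bigr => w _.
  case: ifP => // /andP [wp _].
  by rewrite [in eval_forms f w](scale_factorP wp) eval_formsZ size_tuple mulrA.
rewrite exchange_big /=; apply: eq_fbigr => w wB _.
by rewrite -big_mkcond /=; have [p pG wp] := partner w wB; rewrite (big_eqmx_point _ PG pG wp).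
Qed.

Lemma collinearS {S S' : {fset point}} : S' `<=` S -> collinear S -> collinear S'.
Proof. by move=> /fsubsetP sub [u [w Suw]]; exists u, w => p /sub /Suw. Qed.

Lemma matched_all {d A B a b} : distinct_points A -> distinct_points B ->
  {in A, forall v, a v != 0} -> (#|` B| <= #|` A| <= d)%N ->
  (forall S, S `<=` A -> collinear S -> (2 * #|` S| < d)%N) ->
  (forall f : d.-tuple form,
     \sum_(v <- A) a v * eval_forms f v = \sum_(w <- B) b w * eval_forms f w) ->
  matched A B = A.
Proof.
move=> PA PB a0 /andP [BA Ad] few_collinear eqAB.
apply/eqP; rewrite eqEfsubset matchedS; apply/fsubsetP => v0 v0A; apply: contraT => v0nm.
set c := merged_coef d A B a b; set S := [fset p in merged A B | c p != 0].
have inS p : (p \in S) = (p \in merged A B) && (c p != 0) by rewrite !inE.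
have SG : S `<=` merged A B by apply/fsubsetP => p; rewrite inS => /andP [].
have PS := distinct_pointsS SG (distinct_points_merged PA PB).
have c_unmatched v : v \in A `\` matched A B -> c v = a v.
  rewrite in_fsetD => /andP [vnm vA]; rewrite /c /merged_coef vA big1_fset ?subr0 //.
  move=> w wB wv; move: vnm; rewrite !inE vA /=; case/hasP; exists w => //.
  by rewrite eqmxb_sym.
have AS : A `\` matched A B `<=` S.
  apply/fsubsetP => v vAm; have vA : v \in A by move: vAm; rewrite in_fsetD => /andP [].
  by rewrite !inE vA /= c_unmatched // a0.
have relS : veronese_relation d S c.
  split=> [p|f]; first by rewrite inS => /andP [].
  rewrite (big_fset_incl _ SG) => [|p pG]; first exact: merged_relation.
  by rewrite inS pG negbK => /eqP ->; rewrite mul0r.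
have v0S : v0 \in S by rewrite (fsubsetP AS) // in_fsetD v0A v0nm.
have S_big := veronese_relation_card PS v0S relS.
have S_line : collinear S.
  apply: veronese_relation_collinear PS _ relS.
  apply: leq_trans (fsubset_leq_card SG) _; apply: leq_trans (card_merged A B) _.
  by rewrite -addnn (leq_trans _ (leqnSn _)) // leq_add // (leq_trans BA).
have S_le := card_le_double_meet (matchedS A B) (matchedS B A) SG AS BA (card_matched A B PA).
have AS_lt := few_collinear _ (fsubsetIl A S) (collinearS (fsubsetIr A S) S_line).
by move: (leq_ltn_trans S_le AS_lt); rewrite ltnNge (ltnW (ltnW S_big)).
Qed.

Lemma matched_swap {A B} : distinct_points A -> matched A B = A ->
  (#|` B| <= #|` A|)%N -> matched B A = B /\ #|` B| = #|` A|.
Proof.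
move=> PA mAB BA; have := card_matched A B PA; rewrite mAB => AmBA.
have BmBA : (#|` B| <= #|` matched B A|)%N := leq_trans BA AmBA.
split; first by apply/eqP; rewrite eqEfcard matchedS.
by apply/eqP; rewrite eqn_leq BA (leq_trans AmBA) // fsubset_leq_card ?matchedS.
Qed.

End LinearForms.

Section Tensors.
Context {R : realType} {n d : nat}.
Local Notation C := R[i].
Local Notation form := 'cV[C]_n.+1.

Definition eval_tensor (f : d.-tuple form) (T : tensor R n d) : C :=
  \sum_(t : d.-tuple 'I_n.+1) T t * \prod_(i < d) tnth f i (tnth t i) 0.

Lemma eval_tensor_veronese f (v : vec R n) :
  eval_tensor f (veronese d v) = eval_forms f v.
Proof.
rewrite /eval_forms big_tuple.
under eq_bigr do rewrite /eval_form mxE.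
rewrite bigA_distr_bigA /eval_tensor /=.
rewrite (reindex (fun g : {ffun 'I_d -> 'I_n.+1} => [tuple g i | i < d])) /=; last first.
  exists (fun t : d.-tuple 'I_n.+1 => [ffun i => tnth t i]) => g _.
    by apply/ffunP => i; rewrite ffunE tnth_mktuple.
  by apply: eq_from_tnth => i; rewrite tnth_mktuple ffunE.
apply: eq_bigr => g _; rewrite ffunE big_tuple -big_split /=.
by apply: eq_bigr => i _; rewrite !tnth_mktuple.
Qed.

Lemma eval_tensor_sum f (A : {fset vec R n}) (c : vec R n -> C) :
  eval_tensor f (\sum_(v <- A) c v *: veronese d v) = \sum_(v <- A) c v * eval_forms f v.
Proof.
rewrite /eval_tensor.
under eq_bigr do rewrite sum_ffunE big_distrl.
rewrite exchange_big /=; apply: eq_bigr => v _.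
rewrite -eval_tensor_veronese /eval_tensor big_distrr /=.
by apply: eq_bigr => t _; rewrite ffunE mulrA.
Qed.

Lemma point_set_distinct {A : {fset vec R n}} : point_set A -> distinct_points A.
Proof.
case=> A0 Aprop; split=> // v w vA wA /andP [/sub_rVP [k vkw] _].
by apply/eqP/negPn/negP => vw; move: (Aprop v w vA wA vw k); rewrite vkw eqxx.
Qed.

Lemma point_setS (A B : {fset vec R n}) : B `<=` A -> point_set A -> point_set B.
Proof. by move=> /fsubsetP BA [A0 Aprop]; split=> [v /BA|v w /BA vA /BA]; auto. Qed.

Lemma minimal_decomposition_coef {T : tensor R n d} {A a} : minimal_decomposition T A ->
  T = \sum_(v <- A) a v *: veronese d v -> {in A, forall v, a v != 0}.
Proof.
move=> [[PA _] Amin] Ta v vA; apply/negP => /eqP av0.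
apply: (Amin (A `\ v)); first exact: fproperD1.
split; first exact: point_setS (fsubD1set A v) PA.
by exists a; rewrite Ta (big_fsetD1 _ vA) /= av0 scale0r add0r.
Qed.

Lemma collinear_aligned {S : {fset vec R n}} : collinear S -> aligned S.
Proof.
move=> [u [w Suw]]; exists u, w => p /Suw /sub_addsmxP [[x y] /= ->].
by rewrite [x]mx11_scalar [y]mx11_scalar !mul_scalar_mx; exists (x 0 0), (y 0 0).
Qed.

Lemma same_points_matched {A B : {fset vec R n}} :
  matched A B = A -> matched B A = B -> same_points A B.
Proof.
have proportional (X Y : {fset vec R n}) v : matched X Y = X -> v \in X ->
    exists2 w, w \in Y & exists k : C, v = k *: w.
  move=> <-; rewrite !inE => /andP [_ /hasP [w wY /andP [/sub_rVP vw _]]].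
  by exists w.
by move=> mAB mBA; split=> v; apply: proportional.
Qed.

Lemma same_pointsC {A B : {fset vec R n}} : same_points A B -> same_points B A.
Proof. by case. Qed.

Lemma same_points_trans {A B D : {fset vec R n}} :
  same_points A B -> same_points B D -> same_points A D.
Proof.
have chain (X Y Z : {fset vec R n}) v :
    (forall v, v \in X -> exists2 w, w \in Y & exists k : C, v = k *: w) ->
    (forall v, v \in Y -> exists2 w, w \in Z & exists k : C, v = k *: w) ->
    v \in X -> exists2 w, w \in Z & exists k : C, v = k *: w.
  move=> XY YZ vX; have [u uY [k ->]] := XY v vX; have [w wZ [l ->]] := YZ u uY.
  by exists w => //; exists (k * l); rewrite scalerA.
by move=> [AB BA] [BD DB]; split=> v; [exact: chain _ _ _ v AB BD | exact: chain _ _ _ v DB BA].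
Qed.

End Tensors.

Theorem mainTheorem4 (R : realType) (n d : nat)
  (T : tensor R n d) (A : {fset vec R n}) :
  is_symmetric T -> T != 0 ->
  minimal_decomposition T A ->
  (#|` A| <= d)%N ->
  (forall S : {fset vec R n}, S `<=` A -> aligned S -> ~ (d <= 2 * #|` S|)%N) ->
  has_rank T #|` A| /\ identifiable T #|` A|.
Proof.
move=> _ _ minA Ad few_aligned; have [[PA [a Ta]] _] := minA.
have a0 := minimal_decomposition_coef minA Ta.
have DA := point_set_distinct PA.
have few_collinear S : S `<=` A -> collinear S -> (2 * #|` S| < d)%N.
  by move=> SA /collinear_aligned SL; rewrite ltnNge; apply/negP/few_aligned.
have matched_A B : decomposition T B -> (#|` B| <= #|` A|)%N -> matched A B = A.
  move=> [PB [b Tb]] BA.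
  apply: (matched_all (b := b) DA (point_set_distinct PB) a0 _ few_collinear).
    by rewrite BA.
  by move=> f; rewrite -!eval_tensor_sum -Ta -Tb.
have rankA : has_rank T #|` A|.
  split=> [|B DB]; first by exists A; split=> //; split=> //; exists a.
  case: (leqP #|` B| #|` A|) => [BA|/ltnW //].
  by have [_ ->] := matched_swap DA (matched_A B DB BA) BA.
have same_A B : decomposition T B -> #|` B| = #|` A| -> same_points A B.
  move=> DB BA; have mAB := matched_A B DB (eq_leq BA).
  by apply: same_points_matched mAB (matched_swap DA mAB (eq_leq BA)).1.
split=> //; split=> // A1 B1 DA1 A1A DB1 B1A.
exact: same_points_trans (same_pointsC (same_A A1 DA1 A1A)) (same_A B1 DB1 B1A).
Qed.
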